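(* Let $K$, $\alpha$, $E$ and $\varepsilon$ be as in the context, and suppose $\delta(K,\varepsilon)(E)<1/\alpha$. Let $g,h:(0,\infty)\to\mathbb{R}$ be non-decreasing functions with $g(r)\le h(r)$ for all $r\in(0,\infty)\setminus E$. Put $\alpha(r)=1+\varepsilon(r)$. Then there exists $R\ge1$ such that $g(r)\le h(\alpha(r)r)$ for all $r\ge R$.
   Context: $K:(0,\infty)\to(0,\infty)$ is one of: (1) $K\equiv1$; (2) $K(x)=x$; (3) a strictly increasing, continuous, concave function with $1\le K(x)\le x$ for $x\ge1$ satisfying $K(2x)\le\alpha K(x)$ for all $x\ge R_0$, for some constants $\alpha\in(1,2]$, $R_0\ge1$. In case (1) take $\alpha=1$, in case (2) take $\alpha=2$ (so in all cases $K(2x)\le\alpha K(x)$ for large $x$). $E\subset[1,\infty)$ is a measurable set with $\int_E\frac{dx}{K(x)}<\infty$, and $\varepsilon:(0,\infty)\to(0,1]$ is a function. The $K$-density of $E$ relative to $\varepsilon$ is $$\delta(K,\varepsilon)(E)=\limsup_{r\to\infty}\frac{\frac{K(r)}{r}\int_{E\cap[r,\infty)}\frac{dx}{K(x)}}{\varepsilon(r)}.$$ *)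

From Stdlib Require Import Reals Lra ClassicalEpsilon.
Open Scope R_scope.

(** Countable covers of a set A ⊆ R by closed intervals [a n, b n], with a
    per-interval cost relation [cost a b v] ("the interval [a,b] costs v"),
    and total cost s = Σ_n c n. *)
Definition cover_sums (cost : R -> R -> R -> Prop) (A : R -> Prop) (s : R) : Prop :=
  exists a b c : nat -> R,
    (forall n, a n <= b n) /\
    (forall n, cost (a n) (b n) (c n)) /\
    (forall x, A x -> exists n, a n <= x <= b n) /\
    infinite_sum c s.

(** [outer_le cost A v] : the outer measure induced by [cost] of A is <= v
    (i.e. the infimum of the cover sums is <= v; false if it is +oo). *)
Definition outer_le (cost : R -> R -> R -> Prop) (A : R -> Prop) (v : R) : Prop :=
  forall e, 0 < e -> exists s, cover_sums cost A s /\ s <= v + e.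

Definition len_cost (a b v : R) : Prop := v = b - a.

(** Lebesgue measurability (Caratheodory criterion w.r.t. Lebesgue outer
    measure mstar):  mstar(A ∩ E) + mstar(A \ E) <= mstar(A) for all A ⊆ R. *)
Definition lebesgue_measurable (E : R -> Prop) : Prop :=
  forall (A : R -> Prop) (v : R), outer_le len_cost A v ->
    exists v1 v2, outer_le len_cost (fun x => A x /\ E x) v1 /\
                  outer_le len_cost (fun x => A x /\ ~ E x) v2 /\ v1 + v2 <= v.

(** Cost of [a,b] for the measure dx/K(x) (on (0,oo)): Riemann integral of 1/K. *)
Definition wcost (K : R -> R) (a b v : R) : Prop :=
  0 < a /\ exists pr : Riemann_integrable (fun x => / K x) a b, RiemannInt pr = v.

Definition wint_finite (K : R -> R) (A : R -> Prop) : Prop :=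
  exists v, outer_le (wcost K) A v.

(** ∫_A dx/K(x) (value; meaningful when finite): the infimum of cover sums. *)
Definition wint (K : R -> R) (A : R -> Prop) : R :=
  epsilon (inhabits 0)
    (fun v => outer_le (wcost K) A v /\ forall w, outer_le (wcost K) A w -> v <= w).

Definition K_admissible (K : R -> R) (alpha : R) : Prop :=
  (forall x, 0 < x -> 0 < K x) /\
  ( ((forall x, 0 < x -> K x = 1) /\ alpha = 1)
  \/ ((forall x, 0 < x -> K x = x) /\ alpha = 2)
  \/ ( (forall x y, 0 < x -> x < y -> K x < K y)
     /\ (forall x, 0 < x -> continuity_pt K x)
     /\ (forall x y t, 0 < x -> 0 < y -> 0 <= t <= 1 ->
           t * K x + (1 - t) * K y <= K (t * x + (1 - t) * y))
     /\ (forall x, 1 <= x -> 1 <= K x <= x)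
     /\ 1 < alpha <= 2
     /\ (exists R0, 1 <= R0 /\ forall x, R0 <= x -> K (2 * x) <= alpha * K x))).

Definition density_quot (K eps : R -> R) (E : R -> Prop) (r : R) : R :=
  (K r / r) * wint K (fun x => E x /\ r <= x) / eps r.

Definition limsup_infty_lt (F : R -> R) (L : R) : Prop :=
  exists c, c < L /\ exists R0, forall r, R0 <= r -> F r <= c.

Definition K_density_lt (K eps : R -> R) (E : R -> Prop) (L : R) : Prop :=
  limsup_infty_lt (density_quot K eps E) L.

(* If g(r) > h((1 + ε(r)) r), monotonicity of g and h forces the whole interval
   [r, (1 + ε(r)) r] into E, since at a point t of it outside E we would get
   g(r) <= g(t) <= h(t) <= h((1 + ε(r)) r).  That interval has dx/K(x)-measure at
   least ε(r) r / K((1 + ε(r)) r) >= ε(r) r / (α K(r)) once r is large, so the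
   density quotient at r is at least 1/α, contradicting δ(K,ε)(E) < 1/α.  The
   measure estimate is the fact that countably many closed intervals covering
   [x, y] have total length at least y - x (Heine–Borel after enlarging the
   n-th interval by d / 2^(n+2)). *)

From Stdlib Require Import Reals Lra Lia List Classical ClassicalEpsilon.
Open Scope R_scope.

Definition lsum (F : nat -> R) (l : list nat) : R :=
  fold_right (fun n acc => F n + acc) 0 l.

Lemma lsum_app F l1 l2 : lsum F (l1 ++ l2) = lsum F l1 + lsum F l2.
Proof. induction l1 as [|n l1 IH]; simpl; [ring | rewrite IH; ring]. Qed.

Lemma lsum_seqS F N : lsum F (seq 0 (S N)) = lsum F (seq 0 N) + F N.
Proof. rewrite seq_S, lsum_app; simpl; ring. Qed.

Lemma lsum_le F G l : (forall n, In n l -> F n <= G n) -> lsum F l <= lsum G l.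
Proof.
  induction l as [|n l IH]; simpl; intros HFG; [lra|].
  pose proof (HFG n (or_introl eq_refl)).
  assert (lsum F l <= lsum G l) by (apply IH; auto).
  lra.
Qed.

Lemma lsum_nonneg F l : (forall n, 0 <= F n) -> 0 <= lsum F l.
Proof.
  intros HF; induction l as [|n l IH]; simpl; [lra|].
  specialize (HF n); lra.
Qed.

Lemma lsum_plus F G l : lsum (fun n => F n + G n) l = lsum F l + lsum G l.
Proof. induction l as [|n l IH]; simpl; [ring | rewrite IH; ring]. Qed.

Lemma lsum_scal c F l : lsum (fun n => c * F n) l = c * lsum F l.
Proof. induction l as [|n l IH]; simpl; [ring | rewrite IH; ring]. Qed.

Lemma sum_f_R0_lsum F N : sum_f_R0 F N = lsum F (seq 0 (S N)).
Proof.
  induction N as [|N IH]; [simpl; ring|].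
  rewrite lsum_seqS, <- IH; reflexivity.
Qed.

Lemma lsum_geom N : lsum (fun n => / 2 ^ S n) (seq 0 N) = 1 - / 2 ^ N.
Proof.
  induction N as [|N IH]; [simpl; rewrite Rinv_1; ring|].
  rewrite lsum_seqS, IH.
  assert (2 ^ N <> 0) by (apply pow_nonzero; lra).
  simpl; field; auto.
Qed.

(* Induction on the length: remove the interval containing y and recurse on
   [x, u k]. *)
Lemma lsum_open_cover_length (u v : nat -> R) :
  forall len l x y, length l = len -> x <= y ->
  (forall t, x <= t <= y -> exists n, In n l /\ u n < t < v n) ->
  y - x <= lsum (fun n => Rmax 0 (v n - u n)) l.
Proof.
  intros len; induction len as [len IH] using (well_founded_induction Wf_nat.lt_wf).
  intros l x y Hlen Hxy Hcov.
  set (F := fun n => Rmax 0 (v n - u n)).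
  destruct (Hcov y (conj Hxy (Rle_refl y))) as [k [Hk [Huk Hvk]]].
  destruct (in_split k l Hk) as [l1 [l2 ->]].
  rewrite lsum_app; simpl; fold (F k).
  assert (HFk : v k - u k <= F k) by apply Rmax_r.
  assert (HF0 : forall n, 0 <= F n) by (intro; apply Rmax_l).
  pose proof (lsum_nonneg F l1 HF0); pose proof (lsum_nonneg F l2 HF0).
  destruct (Rle_dec x (u k)) as [Hxu | Hux]; [|lra].
  assert (Hrest : u k - x <= lsum F (l1 ++ l2)).
  { apply (IH (length (l1 ++ l2))); auto.
    - rewrite <- Hlen, !length_app; simpl; lia.
    - intros t Ht; destruct (Hcov t) as [n [Hn Hnt]]; [lra|].
      exists n; split; [|auto].
      apply in_app_or in Hn; apply in_or_app.
      destruct Hn as [Hn | [Hn | Hn]]; auto; subst n; lra. }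
  rewrite lsum_app in Hrest; lra.
Qed.

(* Heine–Borel for a countable open cover of [x, y]: the supremum m of the
   points up to which finitely many intervals suffice lies in some (u k, v k),
   and this interval pushes the bound past m unless m = y. *)
Lemma interval_finite_subcover (u v : nat -> R) x y : x <= y ->
  (forall t, x <= t <= y -> exists n, u n < t < v n) ->
  exists N, forall t, x <= t <= y -> exists n, (n < N)%nat /\ u n < t < v n.
Proof.
  intros Hxy Hcov.
  set (Q := fun z => exists N, forall t, x <= t <= z ->
                       exists n, (n < N)%nat /\ u n < t < v n).
  set (St := fun z => x <= z <= y /\ Q z).
  assert (HSx : St x).
  { split; [lra|]. destruct (Hcov x) as [k Hk]; [lra|].
    exists (S k); intros t Ht.
    replace t with x by lra; exists k; split; [lia | auto]. }
  destruct (completeness St) as [m [Hub Hleast]].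
  { exists y; intros z [Hz _]; lra. }
  { exists x; exact HSx. }
  assert (Hxm : x <= m) by (apply Hub; exact HSx).
  assert (Hmy : m <= y) by (apply Hleast; intros z [Hz _]; lra).
  destruct (Hcov m) as [k [Hkm Hmk]]; [lra|].
  assert (Hext : forall z, x <= z <= y -> z < v k -> Q z).
  { intros z Hz Hzv.
    assert (exists w, St w /\ u k < w) as [w [[Hw [N HN]] Hwu]].
    { apply NNPP; intro Hno.
      assert (m <= u k); [|lra].
      apply Hleast; intros w Hw; apply Rnot_lt_le; intro; apply Hno; eauto. }
    exists (Nat.max N (S k)); intros t Ht.
    destruct (Rle_dec t w).
    - destruct (HN t) as [n [Hn Hnt]]; [lra|]. exists n; split; [lia | auto].
    - exists k; split; [lia | lra]. }
  destruct (Rle_dec y m); [apply (Hext y); lra|].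
  exfalso.
  set (z := Rmin y ((m + v k) / 2)).
  assert (Hzy : z <= y) by apply Rmin_l.
  assert (Hzv : z <= (m + v k) / 2) by apply Rmin_r.
  assert (Hmz : m < z) by (apply Rmin_glb_lt; lra).
  assert (St z) by (split; [lra | apply Hext; lra]).
  pose proof (Hub z H); lra.
Qed.

Lemma interval_cover_length (a b w : nat -> R) x y s : x <= y ->
  (forall t, x <= t <= y -> exists n, a n <= t <= b n) ->
  (forall n, Rmax 0 (Rmin (b n) y - Rmax (a n) x) <= w n) ->
  (forall N, sum_f_R0 w N <= s) ->
  y - x <= s.
Proof.
  intros Hxy Hcov Hw Hs.
  assert (Hw0 : forall n, 0 <= w n).
  { intro n; eapply Rle_trans; [apply Rmax_l | apply Hw]. }
  assert (Hpart : forall N, lsum w (seq 0 N) <= s).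
  { intro N; specialize (Hs N); specialize (Hw0 N).
    rewrite sum_f_R0_lsum, lsum_seqS in Hs; lra. }
  apply Rle_plus_epsilon; intros d Hd.
  set (gap := fun n => d / 2 ^ S (S n)).
  assert (Hgap : forall n, 0 < gap n).
  { intro n; apply Rdiv_lt_0_compat; [lra | apply pow_lt; lra]. }
  set (u := fun n => Rmax (a n) x - gap n).
  set (v := fun n => Rmin (b n) y + gap n).
  destruct (interval_finite_subcover u v x y Hxy) as [N HN].
  { intros t Ht; destruct (Hcov t Ht) as [n Hn]; exists n.
    specialize (Hgap n); unfold u, v.
    assert (Rmax (a n) x <= t) by (apply Rmax_lub; lra).
    assert (t <= Rmin (b n) y) by (apply Rmin_glb; lra).
    lra. }
  assert (Hfin : y - x <= lsum (fun n => Rmax 0 (v n - u n)) (seq 0 N)).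
  { apply (lsum_open_cover_length u v _ (seq 0 N) x y eq_refl Hxy).
    intros t Ht; destruct (HN t Ht) as [n [Hn Hnt]].
    exists n; split; [apply in_seq; lia | exact Hnt]. }
  assert (Hterm : forall n, Rmax 0 (v n - u n) <= w n + d * / 2 ^ S n).
  { intro n.
    replace (v n - u n) with ((Rmin (b n) y - Rmax (a n) x) + d * / 2 ^ S n).
    2:{ unfold u, v, gap. assert (2 ^ n <> 0) by (apply pow_nonzero; lra).
        simpl; field; auto. }
    assert (0 < d * / 2 ^ S n).
    { apply Rmult_lt_0_compat; [lra | apply Rinv_0_lt_compat, pow_lt; lra]. }
    specialize (Hw n); revert Hw; unfold Rmax.
    repeat destruct Rle_dec; lra. }
  assert (Hsum : lsum (fun n => Rmax 0 (v n - u n)) (seq 0 N)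
                 <= lsum w (seq 0 N) + d * (1 - / 2 ^ N)).
  { rewrite <- lsum_geom, <- lsum_scal, <- lsum_plus.
    apply lsum_le; intros n _; apply Hterm. }
  assert (0 < / 2 ^ N) by (apply Rinv_0_lt_compat, pow_lt; lra).
  pose proof (Hpart N); nra.
Qed.

Lemma RiemannInt_ge_const f x y (pr : Riemann_integrable f x y) m : x <= y ->
  (forall t, x < t < y -> m <= f t) -> m * (y - x) <= RiemannInt pr.
Proof.
  intros Hxy Hm.
  rewrite <- (RiemannInt_P15 (RiemannInt_P14 x y m)).
  apply RiemannInt_P19; auto.
Qed.

Section InverseKMeasure.

Variable K : R -> R.
Hypothesis K_pos : forall x, 0 < x -> 0 < K x.
Hypothesis K_nondecreasing : forall x y, 0 < x -> x <= y -> K x <= K y.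

Lemma RiemannInt_inv_K_nonneg x y (pr : Riemann_integrable (fun t => / K t) x y) :
  0 < x -> x <= y -> 0 <= RiemannInt pr.
Proof.
  intros Hx Hxy; rewrite <- (Rmult_0_l (y - x)).
  apply RiemannInt_ge_const; auto.
  intros t Ht; left; apply Rinv_0_lt_compat, K_pos; lra.
Qed.

(* On [max a x, min b y] the integrand 1/K is at least 1/K(y). *)
Lemma wcost_ge_overlap x y a b c : 0 < x -> x <= y -> a <= b -> wcost K a b c ->
  Rmax 0 (Rmin b y - Rmax a x) <= c * K y.
Proof.
  intros Hx Hxy Hab [Ha [pr <-]].
  assert (HKy : 0 < K y) by (apply K_pos; lra).
  apply Rmult_le_reg_r with (/ K y); [now apply Rinv_0_lt_compat|].
  rewrite Rmult_assoc, Rinv_r, Rmult_1_r by lra.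
  set (p := Rmax a x); set (q := Rmin b y).
  assert (Hap : a <= p) by apply Rmax_l.
  assert (Hxp : x <= p) by apply Rmax_r.
  assert (Hqb : q <= b) by apply Rmin_l.
  assert (Hqy : q <= y) by apply Rmin_r.
  destruct (Rle_dec p q) as [Hpq | Hqp].
  2:{ rewrite Rmax_left, Rmult_0_l by lra.
      apply RiemannInt_inv_K_nonneg; auto. }
  rewrite Rmax_right by lra.
  pose (pr_ap := RiemannInt_P22 pr (conj Hap (Rle_trans _ _ _ Hpq Hqb))).
  pose (pr_pb := RiemannInt_P23 pr (conj Hap (Rle_trans _ _ _ Hpq Hqb))).
  pose (pr_pq := RiemannInt_P22 pr_pb (conj Hpq Hqb)).
  pose (pr_qb := RiemannInt_P23 pr_pb (conj Hpq Hqb)).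
  pose proof (RiemannInt_P26 pr_ap pr_pb pr).
  pose proof (RiemannInt_P26 pr_pq pr_qb pr_pb).
  pose proof (RiemannInt_inv_K_nonneg _ _ pr_ap Ha Hap).
  pose proof (RiemannInt_inv_K_nonneg _ _ pr_qb ltac:(lra) Hqb).
  assert (/ K y * (q - p) <= RiemannInt pr_pq).
  { apply RiemannInt_ge_const; auto; intros t Ht.
    apply Rinv_le_contravar; [apply K_pos; lra | apply K_nondecreasing; lra]. }
  lra.
Qed.

Lemma cover_sums_ge_interval (A : R -> Prop) x y s : 0 < x -> x <= y ->
  (forall t, x <= t <= y -> A t) ->
  cover_sums (wcost K) A s -> y - x <= s * K y.
Proof.
  intros Hx Hxy HA [a [b [c [Hab [Hc [Hcov Hsum]]]]]].
  assert (HKy : 0 < K y) by (apply K_pos; lra).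
  apply (interval_cover_length a b (fun n => c n * K y) x y); auto.
  - intros n; apply wcost_ge_overlap; auto.
  - intros N; rewrite <- scal_sum, Rmult_comm.
    apply Rmult_le_compat_r; [lra|].
    apply sum_incr; [exact Hsum|].
    intros n; apply Rmult_le_reg_r with (K y); [lra|].
    rewrite Rmult_0_l.
    eapply Rle_trans; [apply Rmax_l | apply (wcost_ge_overlap x y (a n) (b n)); auto].
Qed.

End InverseKMeasure.

Lemma outer_le_subset cost (A B : R -> Prop) v :
  (forall x, B x -> A x) -> outer_le cost A v -> outer_le cost B v.
Proof.
  intros HBA Hv e He.
  destruct (Hv e He) as [s [[a [b [c [Hab [Hc [Hcov Hs]]]]]] Hsv]].
  exists s; split; [|exact Hsv].
  exists a, b, c; repeat split; auto.
Qed.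

Lemma outer_le_inf_attained cost (A : R -> Prop) v0 m :
  outer_le cost A v0 -> (forall v, outer_le cost A v -> m <= v) ->
  exists v, outer_le cost A v /\ forall w, outer_le cost A w -> v <= w.
Proof.
  intros Hv0 Hm.
  set (T := fun z => exists w, outer_le cost A w /\ z = - w).
  destruct (completeness T) as [M [Hub Hleast]].
  { exists (- m); intros z [w [Hw ->]]; apply Ropp_le_contravar, Hm, Hw. }
  { exists (- v0), v0; auto. }
  exists (- M); split.
  - intros e He.
    assert (exists w, outer_le cost A w /\ w < - M + e / 2) as [w [Hw Hwl]].
    { apply NNPP; intro Hno.
      assert (M <= M - e / 2); [|lra].
      apply Hleast; intros z [w [Hw ->]]; apply Rnot_lt_le; intro.
      apply Hno; exists w; split; auto; lra. }
    destruct (Hw (e / 2)) as [s [Hs Hsw]]; [lra|].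
    exists s; split; [exact Hs | lra].
  - intros w Hw; assert (- w <= M) by (apply Hub; exists w; auto); lra.
Qed.

Lemma wint_ge K (A : R -> Prop) m : wint_finite K A ->
  (forall v, outer_le (wcost K) A v -> m <= v) -> m <= wint K A.
Proof.
  intros [v0 Hv0] Hm.
  apply Hm.
  exact (proj1 (epsilon_spec (inhabits 0) _ (outer_le_inf_attained _ _ _ _ Hv0 Hm))).
Qed.

Lemma wint_ge_interval K (A : R -> Prop) x y :
  (forall x, 0 < x -> 0 < K x) ->
  (forall x y, 0 < x -> x <= y -> K x <= K y) ->
  0 < x -> x <= y -> (forall t, x <= t <= y -> A t) -> wint_finite K A ->
  (y - x) / K y <= wint K A.
Proof.
  intros Kpos Kmono Hx Hxy HA HAf.
  assert (HKy : 0 < K y) by (apply Kpos; lra).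
  apply wint_ge; [exact HAf|].
  intros v Hv; apply Rle_plus_epsilon; intros e He.
  destruct (Hv e He) as [s [Hs Hsv]].
  pose proof (cover_sums_ge_interval K Kpos Kmono A x y s Hx Hxy HA Hs).
  apply Rle_trans with s; [|exact Hsv].
  apply Rmult_le_reg_r with (K y); [exact HKy|].
  unfold Rdiv; rewrite Rmult_assoc, Rinv_l; lra.
Qed.

Lemma K_admissible_nondecreasing K alpha : K_admissible K alpha ->
  forall x y, 0 < x -> x <= y -> K x <= K y.
Proof.
  intros [_ [[HK1 _] | [[HKid _] | [HKinc _]]]] x y Hx Hxy.
  - rewrite !HK1; lra.
  - rewrite !HKid; lra.
  - destruct Hxy as [Hlt | ->]; [left; apply HKinc | right]; auto.
Qed.

Lemma K_admissible_doubling K alpha : K_admissible K alpha ->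
  exists R0, 1 <= R0 /\
    forall x y, R0 <= x -> x <= y <= 2 * x -> K y <= alpha * K x.
Proof.
  intros HK; pose proof (K_admissible_nondecreasing K alpha HK) as Kmono.
  destruct HK as [_ [[HK1 ->] | [[HKid ->] | [_ [_ [_ [_ [Halpha [R0 [HR0 Hdbl]]]]]]]]]].
  - exists 1; repeat split; try lra; intros x y Hx Hy.
    rewrite !HK1; lra.
  - exists 1; repeat split; try lra; intros x y Hx Hy.
    rewrite !HKid; lra.
  - exists R0; repeat split; try lra; intros x y Hx Hy.
    apply Rle_trans with (K (2 * x)); [apply Kmono; lra | apply Hdbl; lra].
Qed.

Lemma nondecreasing_gap_in_exceptional (g h : R -> R) (E : R -> Prop) r r' :
  (forall x y, 0 < x -> x <= y -> g x <= g y) ->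
  (forall x y, 0 < x -> x <= y -> h x <= h y) ->
  (forall t, 0 < t -> ~ E t -> g t <= h t) ->
  0 < r -> h r' < g r -> forall t, r <= t <= r' -> E t.
Proof.
  intros Hg Hh Hgh Hr Hlt t Ht; apply NNPP; intro HEt.
  pose proof (Hgh t ltac:(lra) HEt).
  pose proof (Hh t r' ltac:(lra) (proj2 Ht)).
  pose proof (Hg r t Hr (proj1 Ht)).
  lra.
Qed.

Lemma density_quot_ge_inv K eps E alpha r y :
  0 < r -> 0 < eps r -> 0 < K r -> 0 < K y -> K y <= alpha * K r ->
  eps r * r / K y <= wint K (fun x => E x /\ r <= x) ->
  1 / alpha <= density_quot K eps E r.
Proof.
  intros Hr He HKr HKy Hdbl Hint.
  assert (Halpha : 0 < alpha) by (apply Rmult_lt_reg_r with (K r); lra).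
  apply Rle_trans with (K r / K y).
  - apply Rmult_le_reg_l with (alpha * K y); [apply Rmult_lt_0_compat; lra|].
    replace (alpha * K y * (1 / alpha)) with (K y) by (field; lra).
    replace (alpha * K y * (K r / K y)) with (alpha * K r) by (field; lra).
    exact Hdbl.
  - unfold density_quot.
    apply Rle_trans with (K r / r * (eps r * r / K y) / eps r).
    + right; field; repeat split; lra.
    + unfold Rdiv; apply Rmult_le_compat_r; [left; apply Rinv_0_lt_compat; lra|].
      apply Rmult_le_compat_l; [left; apply Rdiv_lt_0_compat; lra | exact Hint].
Qed.

Theorem lemma1 (K : R -> R) (alpha : R) (E : R -> Prop) (eps : R -> R)
  (g h : R -> R)
  (HK : K_admissible K alpha)
  (HE1 : forall x, E x -> 1 <= x)
  (HEm : lebesgue_measurable E)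
  (HEf : wint_finite K E)
  (Heps : forall r, 0 < r -> 0 < eps r <= 1)
  (Hdens : K_density_lt K eps E (1 / alpha))
  (Hg : forall x y, 0 < x -> x <= y -> g x <= g y)
  (Hh : forall x y, 0 < x -> x <= y -> h x <= h y)
  (Hgh : forall r, 0 < r -> ~ E r -> g r <= h r) :
  exists R0, 1 <= R0 /\ forall r, R0 <= r -> g r <= h ((1 + eps r) * r).
Proof.
  pose proof (K_admissible_nondecreasing K alpha HK) as Kmono.
  destruct (K_admissible_doubling K alpha HK) as [R0 [HR0 Kdbl]].
  destruct HK as [Kpos _].
  destruct Hdens as [c [Hc [R1 HR1]]].
  exists (Rmax R0 R1); split; [eapply Rle_trans; [exact HR0 | apply Rmax_l]|].
  intros r Hr.
  assert (Hr0 : R0 <= r) by (eapply Rle_trans; [apply Rmax_l | exact Hr]).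
  assert (Hr1 : R1 <= r) by (eapply Rle_trans; [apply Rmax_r | exact Hr]).
  destruct (Heps r ltac:(lra)) as [He0 He1].
  set (r' := (1 + eps r) * r).
  assert (HKr : 0 < K r) by (apply Kpos; lra).
  assert (HKr'pos : 0 < K r') by (apply Kpos; unfold r'; nra).
  assert (HKr' : K r' <= alpha * K r) by (apply Kdbl; unfold r'; nra).
  apply Rnot_lt_le; intro Hlt.
  set (A := fun x => E x /\ r <= x).
  assert (HA : forall t, r <= t <= r' -> A t).
  { intros t Ht; split; [|lra].
    apply (nondecreasing_gap_in_exceptional g h E r r'); auto; lra. }
  assert (Hint : eps r * r / K r' <= wint K A).
  { replace (eps r * r) with (r' - r) by (unfold r'; ring).
    apply wint_ge_interval; auto; [lra | unfold r'; nra |].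
    destruct HEf as [v Hv]; exists v.
    apply (outer_le_subset _ E); [intros x []; auto | exact Hv]. }
  pose proof (density_quot_ge_inv K eps E alpha r r' ltac:(lra) He0 HKr HKr'pos HKr' Hint).
  pose proof (HR1 r Hr1); lra.
Qed.
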